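(* Let $n\ge5$, let $k(\hat{\mathsf{A}}_n)$ and $k(\hat{\mathsf{S}}_n)$ denote the numbers of conjugacy classes of $\hat{\mathsf{A}}_n$ and $\hat{\mathsf{S}}_n$, respectively. Then $k(\hat{\mathsf{S}}_n)<2k(\hat{\mathsf{A}}_n)$.
   Context: $\hat{\mathsf{A}}_n$ is the double cover of $\mathsf{A}_n$ and $\hat{\mathsf{S}}_n$ denotes either of the two double covers of $\mathsf{S}_n$. *)

From mathcomp Require Import all_boot all_fingroup all_solvable.
Set Implicit Arguments. Unset Strict Implicit. Unset Printing Implicit Defensive.
Local Open Scope group_scope.

(* For n >= 4 these are exactly the two double covers 2.S_n^+ and 2.S_n^-. *)
Definition is_double_cover_Sym (n : nat) (gT : finGroupType) (G : {group gT})
    (phi : {morphism G >-> {perm 'I_n}}) : Prop :=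
  [/\ phi @* G = 'Sym_('I_n),
      #|'ker phi| = 2,
      'ker phi \subset 'Z(G)
    & 'ker phi \subset G^`(1)].

Definition double_cover_Alt (n : nat) (gT : finGroupType) (G : {group gT})
    (phi : {morphism G >-> {perm 'I_n}}) : {group gT} :=
  (phi @*^-1 'Alt_('I_n))%G.

Set Warnings "-notation-overridden".
From mathcomp Require Import all_boot all_fingroup all_solvable zify.
Set Implicit Arguments. Unset Strict Implicit. Unset Printing Implicit Defensive.
Local Open Scope group_scope.

(* Let H be the preimage of A_n, a subgroup of index 2 in G. Each G-class is a
   G-orbit on H or on G \ H, and those in H are unions of H-classes. By the
   Cauchy-Frobenius lemma the orbits on G \ H are strictly fewer than those on
   H as soon as some y in G has no fixed point in G \ H, i.e. C_G(y) <= H: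
   for every a, x |-> x z^-1 (z fixed by a in G \ H) injects the fixed points
   of a in G \ H into those in H. A lift y of an odd cycle of length n or
   n - 1 will do, since its centraliser in S_n is the cyclic group it
   generates, which lies in A_n. *)

Lemma afix1J (gT : finGroupType) (S : {set gT}) a : 'Fix_(S | 'J)[a] = S :&: 'C[a].
Proof. by rewrite afixJ cent_set1. Qed.

Section IndexTwo.
Variables (gT : finGroupType) (G H : {group gT}).
Hypotheses (sHG : H \subset G) (iHG : #|G : H| = 2).

Lemma card_classes_le_orbitsID :
  #|classes G| <= #|orbit 'J G @: H| + #|orbit 'J G @: (G :\: H)|.
Proof.
have -> : classes G = orbit 'J G @: H :|: orbit 'J G @: (G :\: H).
  by rewrite -imsetU -{1}(setIidPr sHG) setID.
exact: leq_card_setU.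
Qed.

Lemma class_repr_classG x : x \in H -> repr (x ^: H) ^: G = x ^: G.
Proof.
move=> Hx; have /imsetP[h Hh ->] := mem_repr x (class_refl H x).
exact/classGidl/(subsetP sHG).
Qed.

Lemma card_orbitsJ_le_classes : #|orbit 'J G @: H| <= #|classes H|.
Proof.
have -> : orbit 'J G @: H = [set repr C ^: G | C in classes H].
  apply/setP => C; apply/imsetP/imsetP => [[x Hx ->]|[_ /imsetP[x Hx ->] ->]].
    by exists (x ^: H); rewrite ?mem_classes ?class_repr_classG.
  by exists x; rewrite ?class_repr_classG.
exact: leq_imset_card.
Qed.

Let nHG : H <| G := index2_normal sHG iHG.

Lemma card_afix1J_compl_le a :
  #|'Fix_(G :\: H | 'J)[a]| <= #|'Fix_(H | 'J)[a]|.
Proof.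
have [->|[z Fz]] := set_0Vmem 'Fix_(G :\: H | 'J)[a]; first by rewrite cards0.
rewrite -(card_rcoset _ z^-1); apply: subset_leq_card; apply/subsetP => _ /rcosetP[x Fx ->].
move: Fz Fx; rewrite !afix1J => /setIP[GHz cza] /setIP[GHx cxa].
apply/setIP; split; last by rewrite groupM ?groupV.
by move: GHx; rewrite -(rcoset_index2 sHG iHG GHz) => /rcosetP[h Hh ->]; rewrite mulgK.
Qed.

Lemma card_orbitsJ_compl_lt y :
  y \in G -> 'C_G[y] \subset H -> #|orbit 'J G @: (G :\: H)| < #|orbit 'J G @: H|.
Proof.
move=> Gy sCH.
have actsH : [acts G, on H | 'J] by rewrite astabsJ (normal_norm nHG).
have actsGH : [acts G, on G :\: H | 'J] by rewrite actsD // astabsJ normG.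
rewrite -(ltn_pmul2r (cardG_gt0 G)) -!Frobenius_Cauchy //.
rewrite (bigD1 y Gy) [X in _ < X](bigD1 y Gy) /=.
have -> : 'Fix_(G :\: H | 'J)[y] = set0.
  apply/eqP; rewrite -subset0; apply/subsetP => x.
  rewrite afix1J => /setIP[/setDP[Gx nHx] cxy].
  by rewrite (subsetP sCH) in nHx; last exact/setIP.
rewrite cards0 add0n -add1n; apply: leq_add.
  by rewrite card_gt0; apply/set0Pn; exists 1; rewrite afix1J group1.
by apply: leq_sum => a _; apply: card_afix1J_compl_le.
Qed.

Theorem card_classes_lt_index2 y :
  y \in G -> 'C_G[y] \subset H -> #|classes G| < 2 * #|classes H|.
Proof.
move=> Gy sCH; rewrite mul2n -addnn.
apply: leq_ltn_trans card_classes_le_orbitsID _; rewrite -addnS leq_add //.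
  exact: card_orbitsJ_le_classes.
exact: leq_trans (card_orbitsJ_compl_lt Gy sCH) card_orbitsJ_le_classes.
Qed.

End IndexTwo.

Section Cycle.
Variables (n m : nat).
Hypotheses (m_ge2 : 2 <= m) (m_le_n : m <= n) (n_le_m1 : n <= m.+1).

Definition mcycle_fun (i : 'I_n) : 'I_n :=
  insubd i (if i < m then i.+1 %% m else i).

Lemma mcycle_funE i : val (mcycle_fun i) = if i < m then i.+1 %% m else i.
Proof.
rewrite /mcycle_fun val_insubd; case: ifP => him //=.
case: ifP him => hi; last by rewrite ltn_ord.
by rewrite (leq_trans _ m_le_n) // ltn_mod; lia.
Qed.

Lemma modS_lt i : i < m -> i.+1 %% m = if i.+1 == m then 0 else i.+1.
Proof.
move=> him; case: eqP => [->|neq]; first by rewrite modnn.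
by rewrite modn_small //; lia.
Qed.

Lemma mcycle_fun_inj : injective mcycle_fun.
Proof.
move=> i j /(congr1 val); rewrite !mcycle_funE => e; apply: val_inj => /=.
move: e; case: ifP => hi; case: ifP => hj; rewrite ?modS_lt //.
- by case: eqP; case: eqP; lia.
- by case: eqP; lia.
- by case: eqP; lia.
Qed.

Definition mcycle : {perm 'I_n} := perm mcycle_fun_inj.

Lemma mcycleE i : val (mcycle i) = if i < m then i.+1 %% m else i.
Proof. by rewrite permE mcycle_funE. Qed.

Lemma mcycle_fix i : (mcycle i == i) = (m <= i).
Proof.
apply/eqP/idP => [/(congr1 val)|h]; last by apply: val_inj; rewrite mcycleE ltnNge h.
rewrite mcycleE; case: ifP => hi; last by rewrite leqNgt hi.
by rewrite modS_lt //; case: eqP => /=; lia.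
Qed.

Let i0 : 'I_n := Ordinal (leq_trans (ltnW m_ge2) m_le_n).

Lemma mcycleX0 j : j < m -> val ((mcycle ^+ j) i0) = j.
Proof.
elim: j => [|j IHj] ltjm; first by rewrite expg0 perm1.
rewrite expgSr permM mcycleE IHj; last lia.
by rewrite ifT ?modS_lt; [case: eqP; lia | lia | lia].
Qed.

Lemma mcycle_cent1_fix0 r : commute r mcycle -> r i0 = i0 -> r = 1.
Proof.
move=> crc ri0; apply/permP => i; rewrite perm1.
have [ltim | leim] := ltnP i m.
  have -> : i = (mcycle ^+ i) i0 by apply: val_inj; rewrite mcycleX0.
  by rewrite -permM -(commuteX i crc) permM ri0.
have : mcycle (r i) == r i.
  by rewrite -permM crc permM; have /eqP-> : mcycle i == i by rewrite mcycle_fix.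
rewrite mcycle_fix => lerim; apply: val_inj => /=.
by have := ltn_ord i; have := ltn_ord (r i); lia.
Qed.

Lemma cent1_mcycle : 'C[mcycle] \subset <[mcycle]>.
Proof.
apply/subsetP => t /cent1P ctc.
have ltk : val (t i0) < m.
  rewrite ltnNge -mcycle_fix -permM ctc permM (inj_eq perm_inj) mcycle_fix -ltnNge.
  exact: ltnW m_ge2.
set k := val (t i0).
have ck : (mcycle ^+ k) i0 = t i0 by apply: val_inj; rewrite mcycleX0.
have : t * (mcycle ^+ k)^-1 = 1.
  apply: mcycle_cent1_fix0; last by rewrite permM -ck permK.
  by apply/commute_sym/commuteM; [exact: commute_sym | exact/commuteV/commuteX].
by move/eqP; rewrite mulg_eq1 invgK => /eqP->; apply: mem_cycle.
Qed.

Lemma mcycle_order : mcycle ^+ m = 1.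
Proof.
have m_gt0 : 0 < m := ltnW m_ge2.
apply: mcycle_cent1_fix0; first exact/commute_sym/commuteX.
apply: val_inj; rewrite -(prednK m_gt0) expgSr permM mcycleE mcycleX0 ?ltn_predL //.
by rewrite m_gt0 prednK ?modnn.
Qed.

(* An odd cycle is the square of its ((m+1)/2)-th power. *)
Lemma mcycle_even : odd m -> mcycle \in 'Alt_('I_n).
Proof.
move=> odd_m; have -> : mcycle = (mcycle ^+ (m.+1)./2) ^+ 2.
  by rewrite -expgM muln2 even_halfK /= ?odd_m // expgS mcycle_order mulg1.
by rewrite Alt_even expgS expg1 odd_permM addbb.
Qed.

Lemma cent1_odd_mcycle_sub_Alt : odd m -> 'C[mcycle] \subset 'Alt_('I_n).
Proof.
by move=> odd_m; apply: subset_trans cent1_mcycle _; rewrite cycle_subG mcycle_even.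
Qed.

End Cycle.

Theorem lemma4p5 (n : nat) (gT : finGroupType) (G : {group gT})
    (phi : {morphism G >-> {perm 'I_n}}) :
  5 <= n ->
  is_double_cover_Sym phi ->
  #|classes G| < 2 * #|classes (double_cover_Alt phi)|.
Proof.
move=> n_ge5 [imG _ _ _]; set H := double_cover_Alt phi.
pose m := if odd n then n else n.-1.
have odd_m : odd m.
  rewrite /m; case: ifP => //; rewrite -{1}(@prednK n) /=; last by lia.
  by move/negbFE.
have [m_ge2 m_le_n n_le_m1] : [/\ 2 <= m, m <= n & n <= m.+1].
  by rewrite /m; case: ifP; split; lia.
have sHG : H \subset G := morphpre_sub phi _.
have iHG : #|G : H| = 2.
  rewrite -{1}(morphpreT phi) index_morphpre ?imG //.
  by rewrite Alt_index ?card_ord //; lia.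
have /morphimP[y Gy _ phi_y] : mcycle m_ge2 m_le_n n_le_m1 \in phi @* G.
  by rewrite imG inE.
apply: (card_classes_lt_index2 sHG iHG Gy).
apply: subset_trans (_ : _ \subset phi @*^-1 'C_[set: _][phi y]) _.
  by rewrite -{1}(morphpreT phi) morphpre_subcent1.
by rewrite morphpreS // -phi_y subIset // cent1_odd_mcycle_sub_Alt ?orbT.
Qed.
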